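(* Let $L\ge1$, $S_0>0$, $N_0\ge0$, and for $l=1,\dots,L$ let $S_l,N_l\ge 0$ and constants $A_l>0$, $B_l,C_l,\xi_l\ge 0$ satisfy $S_l\ge A_lS_{l-1}$ and $N_l\le B_lN_{l-1}+C_lS_{l-1}+\xi_l$. Let $D$ be a finite set of documents, $D^+\subseteq D$ a nonempty gold set, $S_D:D\to[0,\infty)$ a document score function, and $P_k$ a set of $k$ documents with the largest scores (ties arbitrary). Fix $0<\rho\le\rho_A$, put $m_\rho=\lceil\rho|D^+|\rceil$, let $\tau_\rho^+$ be the $m_\rho$-th largest gold score, $\mathcal B_\rho=\min\{k:|P_k\cap D^+|\ge m_\rho\}$ and $M_L^-=\sum_{d\in D\setminus D^+}S_D(d)$. Assume there are constants $K_A\ge0$, $\zeta_A\ge0$, $c_\rho\in(0,1]$ with $$M_L^-\le K_AN_L+\zeta_A,\qquad \tau_\rho^+\ge\frac{c_\rho}{m_\rho}S_L .$$ Then $$\mathcal B_\rho\le m_\rho+\frac{m_\rho K_A}{c_\rho}\operatorname{SNR}_L^{-1}+\frac{m_\rho\zeta_A}{c_\rho S_L},$$ and consequently $$\mathcal B_\rho\le m_\rho+\frac{m_\rho K_A}{c_\rho}\Big[\Big(\prod_{l=1}^{L}\frac{B_l}{A_l}\Big)\operatorname{SNR}_0^{-1}+\sum_{i=1}^{L}\Big(\frac{C_i}{A_i}+\frac{\xi_i}{A_iS_{i-1}}\Big)\prod_{t=i+1}^{L}\frac{B_t}{A_t}\Big]+\frac{m_\rho\zeta_A}{c_\rho S_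L}.$$
   Context: $\operatorname{SNR}_l=S_l/N_l$ ($+\infty$ if $N_l=0$), $\operatorname{SNR}_l^{-1}=N_l/S_l$; empty products equal $1$. In the paper $S_l,N_l$ are entity-level evidence-signal and noise masses at layer $l$ of a graph reader, and document scores come from entity-to-document projection. $\rho_A\in[0,1]$ is the anchor coverage: given an entity set $R_q$ (recoverable evidence region) and anchor sets $A(d)$ of entities for documents $d$, $\rho_A=|\{d\in D^+:A(d)\cap R_q\neq\varnothing\}|/|D^+|$. *)

From HB Require Import structures.
From mathcomp Require Import all_boot all_order all_algebra.
From mathcomp Require Import reals.
Set Implicit Arguments. Unset Strict Implicit. Unset Printing Implicit Defensive.
Import Order.TTheory GRing.Theory Num.Theory.
Local Open Scope ring_scope.

Definition SNRinv (R : realType) (S N : R) : R := N / S.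

Definition anchor_coverage (R : realType) (T E : finType)
  (Dp : {set T}) (Anch : T -> {set E}) (Rq : {set E}) : R :=
  #|[set d in Dp | Anch d :&: Rq != set0]|%:R / #|Dp|%:R.

Definition m_rho (R : realType) (T : finType) (rho : R) (Dp : {set T}) : nat :=
  `|Num.ceil (rho * #|Dp|%:R)|%N.

Definition topk_family (R : realType) (T : finType) (D : {set T})
  (SD : T -> R) (P : nat -> {set T}) : Prop :=
  forall k, (k <= #|D|)%N ->
    [/\ P k \subset D, #|P k| = k &
        forall x y, x \in P k -> y \in D :\: P k -> SD y <= SD x].

Definition tau_plus (R : realType) (T : finType) (SD : T -> R)
  (Dp : {set T}) (m : nat) : R :=
  nth 0 (sort (fun a b : R => b <= a) [seq SD d | d <- enum Dp]) m.-1.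

Definition B_rho (T : finType) (D Dp : {set T}) (P : nat -> {set T})
  (m : nat) : nat :=
  find (fun k => (m <= #|P k :&: Dp|)%N) (iota 0 #|D|.+1).

Definition M_minus (R : realType) (T : finType) (D Dp : {set T})
  (SD : T -> R) : R := \sum_(d in D :\: Dp) SD d.

From HB Require Import structures.
From mathcomp Require Import all_boot all_order all_algebra.
From mathcomp Require Import reals ring zify.
Set Implicit Arguments. Unset Strict Implicit. Unset Printing Implicit Defensive.
Import Order.TTheory GRing.Theory Num.Theory.
Local Open Scope ring_scope.

(* The ratio [N l / S l] obeys an affine recursion: dividing the noise bound by
   [S l >= A l * S (l-1)] gives a factor [B l / A l] on the previous ratio plus
   the additive term [C l / A l + xi l / (A l * S (l-1))]; unrolling it gives the
   second bound.  For the first, at least [m] gold documents score at least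
   [tau := tau_rho^+], so once the top-k set contains every non-gold document
   scoring at least [tau] it also covers [m] gold ones; hence
   [B_rho <= m + #{non-gold d : tau <= S_D d} <= m + M_L^- / tau], and the two
   hypotheses turn [M_L^- / tau] into the stated SNR term. *)

Lemma affine_recursion_le (R : numDomainType) (x q c : nat -> R) n :
  (forall l, (1 <= l <= n)%N -> 0 <= q l) ->
  (forall l, (1 <= l <= n)%N -> x l <= q l * x l.-1 + c l) ->
  x n <= (\prod_(1 <= l < n.+1) q l) * x 0
           + \sum_(1 <= i < n.+1) c i * \prod_(i.+1 <= t < n.+1) q t.
Proof.
elim: n => [|n IHn] q_ge0 x_rec; first by rewrite !big_geq // mul1r addr0.
have le_n l : (1 <= l <= n)%N -> (1 <= l <= n.+1)%N.
  by case/andP=> l1 ln; rewrite l1 ltnW.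
have IH := IHn (fun l hl => q_ge0 l (le_n l hl)) (fun l hl => x_rec l (le_n l hl)).
have top : (1 <= n.+1 <= n.+1)%N by rewrite leqnn.
apply: (le_trans (x_rec _ top)).
apply: (le_trans (lerD (ler_wpM2l (q_ge0 _ top) IH) (lexx _))).
rewrite [X in _ <= X * _ + _]big_nat_recr //= [X in _ <= _ + X]big_nat_recr //=.
rewrite [\prod_(n.+2 <= _ < n.+2) _]big_geq // mulr1.
have sum_recr : \sum_(1 <= i < n.+1) c i * \prod_(i.+1 <= t < n.+2) q t
    = (\sum_(1 <= i < n.+1) c i * \prod_(i.+1 <= t < n.+1) q t) * q n.+1.
  rewrite mulr_suml; apply: eq_big_nat => i /andP[_ ile].
  by rewrite (big_nat_recr _ _ _ ile) /= mulrA.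
by rewrite sum_recr le_eqVlt; apply/predU1l; ring.
Qed.

Section SignalNoiseRecursion.
Variables (R : realFieldType) (L : nat) (S N A B C xi : nat -> R).
Hypothesis S0_gt0 : 0 < S 0.
Hypothesis A_gt0 : forall l, (1 <= l <= L)%N -> 0 < A l.
Hypothesis B_ge0 : forall l, (1 <= l <= L)%N -> 0 <= B l.
Hypothesis N_ge0 : forall l, (1 <= l <= L)%N -> 0 <= N l.
Hypothesis S_growth : forall l, (1 <= l <= L)%N -> A l * S l.-1 <= S l.
Hypothesis N_recursion :
  forall l, (1 <= l <= L)%N -> N l <= B l * N l.-1 + C l * S l.-1 + xi l.

Lemma signal_gt0 n : (n <= L)%N -> 0 < S n.
Proof.
elim: n => // n IHn nL.
have nL' : (1 <= n.+1 <= L)%N by rewrite nL.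
apply: (lt_le_trans _ (S_growth nL')).
by rewrite mulr_gt0 ?A_gt0 // IHn // ltnW.
Qed.

Lemma noise_ratio_step n : (n < L)%N ->
  N n.+1 / S n.+1
    <= B n.+1 / A n.+1 * (N n / S n) + (C n.+1 / A n.+1 + xi n.+1 / (A n.+1 * S n)).
Proof.
move=> nL; have nL' : (1 <= n.+1 <= L)%N by rewrite nL.
have Sn := signal_gt0 (ltnW nL); have An := A_gt0 nL'.
have ASn : 0 < A n.+1 * S n by rewrite mulr_gt0.
have split_ratio : (B n.+1 * N n + C n.+1 * S n + xi n.+1) / (A n.+1 * S n)
    = B n.+1 / A n.+1 * (N n / S n) + (C n.+1 / A n.+1 + xi n.+1 / (A n.+1 * S n)).
  by field; rewrite !gt_eqF.
rewrite -split_ratio; apply: (@le_trans _ _ (N n.+1 / (A n.+1 * S n))).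
  rewrite ler_wpM2l ?N_ge0 // lef_pV2 ?posrE ?signal_gt0 //.
  exact: S_growth.
by rewrite ler_wpM2r ?invr_ge0 ?N_recursion // ltW.
Qed.

Lemma noise_ratio_le n : (n <= L)%N ->
  N n / S n <= (\prod_(1 <= l < n.+1) (B l / A l)) * (N 0 / S 0)
    + \sum_(1 <= i < n.+1)
        ((C i / A i + xi i / (A i * S i.-1)) * \prod_(i.+1 <= t < n.+1) (B t / A t)).
Proof.
move=> nL; have inL l : (1 <= l <= n)%N -> (1 <= l <= L)%N.
  by case/andP=> l1 ln; rewrite l1 (leq_trans ln).
apply: (affine_recursion_le (x := fun l => N l / S l) (q := fun l => B l / A l)
          (c := fun l => C l / A l + xi l / (A l * S l.-1))) => l ln /=.
  by rewrite divr_ge0 ?B_ge0 ?inL // ltW // A_gt0 ?inL.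
case: l ln => // l ln; apply: noise_ratio_step.
by case/andP: (inL _ ln).
Qed.

End SignalNoiseRecursion.

Lemma count_ge_nth_sort (R : realDomainType) (s : seq R) (m : nat) :
  (0 < m <= size s)%N ->
  (m <= count (fun x => nth 0 (sort (fun a b : R => b <= a)%R s) m.-1 <= x)%R s)%N.
Proof.
case: m => // m /= ms; set t := sort _ s.
(* Sorting by [>=] is sorting in the dual order, where [nth_count_gt] applies. *)
have sorted_t : sorted (<=%O : rel R^d) t.
  by apply: (sort_sorted (T := R^d)) => a b; exact: le_total.
have /permP count_t := permEl (perm_sort (fun a b : R => b <= a)%R s).
rewrite -count_t -/t ltnNge; apply/negP => few.
have := @nth_count_gt _ R^d (nth 0 t m) 0 t m sorted_t.
by rewrite few size_sort ms ltxx => /(_ isT).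
Qed.

Lemma tau_plus_card (R : realType) (T : finType) (SD : T -> R) (Dp : {set T}) m :
  (0 < m <= #|Dp|)%N -> (m <= #|[set d in Dp | (tau_plus SD Dp m <= SD d)%R]|)%N.
Proof.
move=> m_range.
have := @count_ge_nth_sort R [seq SD d | d <- enum Dp] m.
rewrite size_map -cardE => /(_ m_range) /leq_trans; apply.
rewrite count_map -size_filter -(card_uniqP (filter_uniq _ (enum_uniq _))).
by apply: eq_leq; apply: eq_card => d; rewrite mem_filter mem_enum inE andbC.
Qed.

Section TopK.
Variables (R : realType) (T : finType) (D Dp : {set T}) (SD : T -> R).
Variable P : nat -> {set T}.
Hypothesis P_topk : topk_family D SD P.

Lemma topk_above k tau z d : (k <= #|D|)%N -> z \in P k -> SD z < tau ->
  d \in D -> tau <= SD d -> d \in P k.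
Proof.
move=> kD zP z_lt dD tau_le; apply: contraT => dNP.
have [_ _ topk] := P_topk kD.
have := topk z d zP; rewrite inE dNP dD => /(_ isT) d_le.
by move: (le_lt_trans d_le z_lt); rewrite ltNge tau_le.
Qed.

Lemma B_rho_le m k : (k <= #|D|)%N -> (m <= #|P k :&: Dp|)%N ->
  (B_rho D Dp P m <= k)%N.
Proof.
move=> kD cover; rewrite leqNgt; apply/negP => /(before_find 0%N).
by rewrite nth_iota ?ltnS // add0n cover.
Qed.

Hypothesis Dp_sub : Dp \subset D.

Lemma B_rho_le_above m tau :
  (m <= #|[set d in Dp | (tau <= SD d)%R]|)%N ->
  (B_rho D Dp P m <= m + #|[set d in D :\: Dp | (tau <= SD d)%R]|)%N.
Proof.
set G := [set d in Dp | _]; set H := [set d in D :\: Dp | _] => mG.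
set k := (m + #|H|)%N.
have kD : (k <= #|D|)%N.
  rewrite -(cardsID Dp D) (setIidPr Dp_sub); apply: leq_add.
    apply: leq_trans mG _; apply/subset_leq_card/subsetP => d.
    by rewrite inE => /andP[].
  by apply/subset_leq_card/subsetP => d; rewrite !inE => /andP[].
apply: (B_rho_le kD); rewrite leqNgt; apply/negP => few_gold.
have [P_sub P_card _] := P_topk kD.
have many_other : (#|H| < #|P k :\: Dp|)%N.
  have : k = (m + #|H|)%N by [].
  by have := cardsID Dp (P k); rewrite P_card; lia.
have /subsetPn [z zP zNH] : ~~ (P k :\: Dp \subset H).
  by apply: contraL many_other => /subset_leq_card; rewrite leqNgt.
have zD : z \in D :\: Dp.
  by move: zP; rewrite !inE => /andP[-> /(subsetP P_sub) ->].
have z_lt : SD z < tau by move: zNH; rewrite inE zD /= ltNge.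
have G_sub : G \subset P k :&: Dp.
  apply/subsetP => d; rewrite !inE => /andP[dDp tau_le]; rewrite dDp andbT.
  by apply: (topk_above kD _ z_lt _ tau_le); [case/setDP: zP | exact: subsetP dDp].
by move: (leq_trans mG (subset_leq_card G_sub)); rewrite leqNgt few_gold.
Qed.

End TopK.

Lemma card_ge_mulr_le_sum (R : numDomainType) (T : finType) (A : {set T})
    (f : T -> R) t :
  (forall x, x \in A -> 0 <= f x) ->
  #|[set x in A | t <= f x]|%:R * t <= \sum_(x in A) f x.
Proof.
move=> f_ge0; set H := [set x in A | _].
have H_sub : H \subset A by apply/subsetP => x; rewrite inE => /andP[].
rewrite (big_setID H) /= (setIidPr H_sub) -[X in X <= _]addr0 mulr_natl -sumr_const.
apply: lerD; first by apply: ler_sum => x; rewrite inE => /andP[].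
by apply: sumr_ge0 => x /setDP[xA _]; exact: f_ge0.
Qed.

Lemma B_rho_le_mass (R : realType) (T : finType) (D Dp : {set T}) (SD : T -> R)
    (P : nat -> {set T}) m :
  Dp \subset D -> topk_family D SD P -> (forall d, d \in D -> 0 <= SD d) ->
  (0 < m <= #|Dp|)%N -> 0 < tau_plus SD Dp m ->
  (B_rho D Dp P m)%:R <= m%:R + M_minus D Dp SD / tau_plus SD Dp m.
Proof.
move=> Dp_sub P_topk SD_ge0 m_range tau_gt0.
have := B_rho_le_above P_topk Dp_sub (tau_plus_card SD m_range).
rewrite -(ler_nat R) natrD => /le_trans; apply; rewrite lerD2l ler_pdivlMr //.
by apply: card_ge_mulr_le_sum => d /setDP[dD _]; exact: SD_ge0.
Qed.

Lemma anchor_coverage_le1 (R : realType) (T E : finType) (Dp : {set T})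
    (Anch : T -> {set E}) (Rq : {set E}) :
  anchor_coverage R Dp Anch Rq <= 1.
Proof.
rewrite /anchor_coverage; have [->|Dp_gt0] := posnP #|Dp|.
  by rewrite invr0 mulr0 ler01.
rewrite ler_pdivrMr ?ltr0n // mul1r ler_nat.
by apply/subset_leq_card/subsetP => d; rewrite inE => /andP[].
Qed.

Lemma m_rho_range (R : realType) (T : finType) (rho : R) (Dp : {set T}) :
  0 < rho -> rho <= 1 -> Dp != set0 -> (0 < m_rho rho Dp <= #|Dp|)%N.
Proof.
move=> rho_gt0 rho_le1 Dp_ne0; set x := rho * #|Dp|%:R.
have x_gt0 : 0 < x by rewrite mulr_gt0 // ltr0n card_gt0.
have x_le : x <= #|Dp|%:R by rewrite ler_piMl ?ler0n.
have m_ceil : (m_rho rho Dp)%:Z = Num.ceil x by rewrite gez0_abs // ltW // ceil_gt0.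
by rewrite -(ltz_nat 0) -lez_nat m_ceil ceil_gt0 // ceil_le_int x_gt0.
Qed.

Theorem theorem1p13 (R : realType) (L : nat) (S N A B C xi : nat -> R)
  (T E : finType) (D Dp : {set T}) (SD : T -> R) (P : nat -> {set T})
  (Anch : T -> {set E}) (Rq : {set E})
  (rho KA zetaA c : R) :
  (1 <= L)%N ->
  0 < S 0 -> 0 <= N 0 ->
  (forall l, (1 <= l <= L)%N ->
     [/\ 0 <= S l, 0 <= N l, 0 < A l & [/\ 0 <= B l, 0 <= C l & 0 <= xi l]]) ->
  (forall l, (1 <= l <= L)%N -> A l * S l.-1 <= S l) ->
  (forall l, (1 <= l <= L)%N -> N l <= B l * N l.-1 + C l * S l.-1 + xi l) ->
  Dp \subset D -> Dp != set0 ->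
  (forall d, d \in D -> 0 <= SD d) ->
  topk_family D SD P ->
  0 < rho -> rho <= anchor_coverage R Dp Anch Rq ->
  0 <= KA -> 0 <= zetaA -> 0 < c -> c <= 1 ->
  let m := m_rho rho Dp in
  M_minus D Dp SD <= KA * N L + zetaA ->
  c / m%:R * S L <= tau_plus SD Dp m ->
  (B_rho D Dp P m)%:R
    <= m%:R + m%:R * KA / c * SNRinv (S L) (N L) + m%:R * zetaA / (c * S L)
  /\
  (B_rho D Dp P m)%:R
    <= m%:R + m%:R * KA / c *
         ((\prod_(1 <= l < L.+1) (B l / A l)) * SNRinv (S 0) (N 0)
          + \sum_(1 <= i < L.+1)
              ((C i / A i + xi i / (A i * S i.-1))
               * \prod_(i.+1 <= t < L.+1) (B t / A t)))
       + m%:R * zetaA / (c * S L).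
Proof.
move=> L_ge1 S0_gt0 _ hyp S_growth N_recursion Dp_sub Dp_ne0 SD_ge0 P_topk
  rho_gt0 rho_le KA_ge0 zeta_ge0 c_gt0 _ m M_le tau_ge.
have A_gt0 l : (1 <= l <= L)%N -> 0 < A l by case/hyp.
have B_ge0 l : (1 <= l <= L)%N -> 0 <= B l by case/hyp=> _ _ _ [].
have N_ge0 l : (1 <= l <= L)%N -> 0 <= N l by case/hyp.
have SL_gt0 : 0 < S L := signal_gt0 S0_gt0 A_gt0 S_growth (leqnn L).
have NL_ge0 : 0 <= N L by apply: N_ge0; rewrite L_ge1 leqnn.
have rho_le1 := le_trans rho_le (anchor_coverage_le1 R Dp Anch Rq).
have m_range := m_rho_range rho_gt0 rho_le1 Dp_ne0.
have m_gt0 : 0 < m%:R :> R by rewrite ltr0n; case/andP: m_range.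
have thr_gt0 : 0 < c / m%:R * S L by rewrite !mulr_gt0 ?invr_gt0.
have tau_gt0 : 0 < tau_plus SD Dp m := lt_le_trans thr_gt0 tau_ge.
have first_bound : (B_rho D Dp P m)%:R
    <= m%:R + m%:R * KA / c * SNRinv (S L) (N L) + m%:R * zetaA / (c * S L).
  apply: (le_trans (B_rho_le_mass Dp_sub P_topk SD_ge0 m_range tau_gt0)).
  rewrite -addrA lerD2l.
  have -> : m%:R * KA / c * SNRinv (S L) (N L) + m%:R * zetaA / (c * S L)
      = (KA * N L + zetaA) / (c / m%:R * S L).
    by rewrite /SNRinv; field; rewrite !gt_eqF.
  apply: (le_trans (ler_wpM2r _ M_le)); first by rewrite invr_ge0 ltW.
  by rewrite ler_wpM2l ?addr_ge0 ?mulr_ge0 // lef_pV2.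
split=> //; apply: (le_trans first_bound); rewrite lerD2r lerD2l.
apply: ler_wpM2l; first exact: divr_ge0 (mulr_ge0 (ltW m_gt0) KA_ge0) (ltW c_gt0).
exact: noise_ratio_le S0_gt0 A_gt0 B_ge0 N_ge0 S_growth N_recursion _ (leqnn L).
Qed.
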